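(* Let $n\ge 1$, $k\ge 1$, and let $\gamma=((i_1\,j_1),\dots,(i_k\,j_k))\in\Sigma_n(k)$. Fix $l\in\{1,\dots,k\}$. Then: 1. $i_l<x$ for every $x\in C_{\gamma_{l-1}}(j_l)$; moreover, $i_l$ is the largest element $y$ of $C_{\gamma_{l-1}}(i_l)$ such that $y$ is smaller than every element of $C_{\gamma_{l-1}}(j_l)$. 2. $j_l=\max C_{\gamma_{l-1}}(j_l)$. 3. $i_l<x$ for every $x\in C_{\gamma_{l-1}}(i_l+1)$. 4. If $i_l+1\notin\{i_1,\dots,i_{l-1}\}$, then $C_{\gamma_{l-1}}(i_l+1)=\{i_l+1\}$. 5. If $k=n-1$, $i_l=\max\{i_1,\dots,i_{n-1}\}$ and $l=\max\{s\in\{1,\dots,k\}: i_s=i_l\}$, then $j_l=i_l+1$.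
   Context: Let $n\ge1$. $\mathfrak S_n$ is the symmetric group on $\{1,\dots,n\}$; products of permutations are composed from right to left, i.e. $(\sigma\pi)(x)=\sigma(\pi(x))$. $\mathsf T_n$ denotes the set of transpositions of $\mathfrak S_n$; a transposition is always written $(i\,j)$ with $i<j$. For $\sigma\in\mathfrak S_n$, $\ell(\sigma)$ is the number of cycles of $\sigma$ (fixed points counted as cycles) and $|\sigma|=n-\ell(\sigma)$. For $\sigma_1,\sigma_2\in\mathfrak S_n$, write $\sigma_1\preccurlyeq\sigma_2$ iff $|\sigma_2|=|\sigma_1|+|\sigma_1^{-1}\sigma_2|$. For $k\ge0$, $\Sigma_n(k)=\{(\tau_1,\dots,\tau_k)\in(\mathsf T_n)^k : |\tau_1\cdots\tau_k|=k,\ \tau_1\cdots\tau_k\preccurlyeq(1\,2\,\dots\,n)\}$. For $\gamma=(\tau_1,\dots,\tau_k)\in\Sigma_n(k)$ and $0\le l\le k$, $\gamma_l=\tau_1\cdots\tau_l$ (so $\gamma_0$ is the identity). For $\pi\in\mathfrak S_n$ and $x\in\{1,\dots,n\}$, $C_\pi(x)$ denotes the cycle of $\pi$ containing $x$, regarded as a subset of $\{1,\dots,n\}$. *)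

From mathcomp Require Import all_boot all_fingroup.
Set Implicit Arguments.
Unset Strict Implicit.
Unset Printing Implicit Defensive.

(* Convention: the ground set {1,...,n} is modelled by 'I_n = {0,...,n-1},
   via the order-preserving shift x |-> x-1.  All statements involve only
   the order, successor (+1) and cycle structure, so this is harmless. *)

Definition ncycles n (s : {perm 'I_n}) : nat := #|porbits s|.
Definition absp n (s : {perm 'I_n}) : nat := n - ncycles s.

(* The paper composes right to left: (s p)(x) = s(p(x)).  In MathComp,
   (p * s) x = s (p x), so the paper's product s p is MathComp's  p * s. *)
Definition pcomp n (s p : {perm 'I_n}) : {perm 'I_n} := p * s.

Definition preceq n (s1 s2 : {perm 'I_n}) : Prop :=
  absp s2 = absp s1 + absp (pcomp s1^-1 s2).

(* The long cycle (1 2 ... n), i.e. x |-> x+1 mod n on 'I_n. *)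
Definition longcycle n : {perm 'I_n} := perm (@ordS_inj n).

(* A transposition (i j), i<j, is represented by the pair (i, j). *)
Definition transp n (p : 'I_n * 'I_n) : {perm 'I_n} := tperm p.1 p.2.

Fixpoint tprod n (g : seq ('I_n * 'I_n)) : {perm 'I_n} :=
  match g with
  | [::] => 1
  | p :: g' => pcomp (transp p) (tprod g')
  end.

Definition gam n (g : seq ('I_n * 'I_n)) (l : nat) : {perm 'I_n} :=
  tprod (take l g).

Definition Sigma n (k : nat) (g : seq ('I_n * 'I_n)) : Prop :=
  [/\ size g = k,
      all (fun p : 'I_n * 'I_n => p.1 < p.2) g,
      absp (tprod g) = k &
      preceq (tprod g) (longcycle n)].

Definition Cyc n (pi : {perm 'I_n}) (x : 'I_n) : {set 'I_n} := porbit pi x.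

(* Proof outline.
   - Multiplying by a transposition (x y) merges the cycles of x and y when
     they differ and splits their common cycle otherwise (library lemma
     porbits_mul_tperm); hence |.| changes by one and is subadditive.
   - Reading 'I_n as the circle Z/nZ, call s arc-closed when, for every u,
     the open forward arc from u to s u is a union of cycles of s.  The long
     cycle is arc-closed, splitting a cycle preserves arc-closedness, and any
     s <= t is obtained from t by successive splittings, so every
     permutation below c is arc-closed.
   - Every prefix gamma_m of a minimal factorisation is again minimal and
     below c, so step m+1 merges two cycles of the arc-closed gamma_m into a
     cycle of the arc-closed gamma_{m+1}; comparing the arcs of i and j
     before and after this merge gives items 1-3.
   - Item 4 follows since the minimum of a nontrivial cycle of gamma_m is
     one of i_1, ..., i_m; item 5 because otherwise i_l + 1 would remain a
     fixed point up to gamma_k, which has a single cycle when k = n - 1. *)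

From Pilot Require Import Defs.
From mathcomp Require Import all_boot all_fingroup.
From mathcomp Require Import zify.
Set Implicit Arguments. Unset Strict Implicit. Unset Printing Implicit Defensive.

Section Cycles.
Variable T : finType.
Implicit Types (s : {perm T}) (i j x y z w : T).

Lemma porbit_step s x z : z \in porbit s x -> s z \in porbit s x.
Proof. by case/porbitP=> m ->; rewrite -permM -expgSr mem_porbit. Qed.

Lemma porbit_ind s (P : T -> Prop) x :
  (forall z, P z -> P (s z)) -> P x -> forall z, z \in porbit s x -> P z.
Proof.
move=> sP Px z /porbitP[m ->]; elim: m => [|m IHm]; first by rewrite expg0 perm1.
by rewrite expgSr permM; apply: sP.
Qed.

Lemma porbit_fixed s x y : s x = x -> y \in porbit s x -> y = x.
Proof. by move=> sx; apply: (porbit_ind (P := fun z => z = x)) => // z ->. Qed.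

Lemma porbit_trans s x y z : z \in porbit s y -> y \in porbit s x -> z \in porbit s x.
Proof. by move=> zy; rewrite -eq_porbit_mem => /eqP <-. Qed.

Lemma porbit_same s x v w : v \in porbit s x -> w \in porbit s x -> w \in porbit s v.
Proof. by move=> vx wx; apply: porbit_trans wx _; rewrite porbit_sym. Qed.

Lemma card_porbits_le s : #|porbits s| <= #|T|.
Proof. exact: leq_imset_card. Qed.

Lemma card_porbits_ge2 s x y : porbit s x != porbit s y -> 1 < #|porbits s|.
Proof.
move=> ne; apply: leq_trans (_ : 2 <= #|[set porbit s x; porbit s y]|) _.
  by rewrite cards2 ne.
by apply/subset_leq_card/subsetP => C; rewrite !inE => /orP[] /eqP ->; apply: imset_f.
Qed.

Lemma card_porbits_split s x y :
  x != y -> x \in porbit s y -> #|porbits (tperm x y * s)%g| = #|porbits s|.+1.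
Proof. by move=> nxy xy; have := porbits_mul_tperm s x y; rewrite xy nxy /=; lia. Qed.

Lemma card_porbits_merge s x y :
  x \notin porbit s y -> #|porbits (tperm x y * s)%g|.+1 = #|porbits s|.
Proof.
move=> xy; have nxy : x != y by apply: contraNneq xy => ->; apply: porbit_id.
by have := porbits_mul_tperm s x y; rewrite xy nxy /=; lia.
Qed.

Section Merge.
Variables (s : {perm T}) (i j : T).
Hypothesis ij_apart : i \notin porbit s j.

Lemma merge_join : j \in porbit (tperm i j * s)%g i.
Proof.
apply/negPn/negP; rewrite -porbit_sym => /card_porbits_merge.
rewrite tpermKg -(card_porbits_merge ij_apart); lia.
Qed.

Lemma merge_sub w z : z \in porbit s w -> z \in porbit (tperm i j * s)%g w.
Proof.
apply: (porbit_ind (P := fun z => z \in porbit (tperm i j * s)%g w)); last exact: porbit_id.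
move=> u uw; have -> : s u = (tperm i j * s)%g (tperm i j u) by rewrite permM tpermK.
apply: porbit_step; case: tpermP => [ui|uj|_ _] //; subst u.
- exact: porbit_trans merge_join uw.
- by apply: porbit_trans uw; rewrite porbit_sym merge_join.
Qed.

End Merge.

Lemma tperm_porbit_in s i j z :
  z \in porbit (tperm i j * s)%g i -> z \in porbit s i \/ z \in porbit s j.
Proof.
apply: (porbit_ind (P := fun z => z \in porbit s i \/ z \in porbit s j)).
  move=> u zij; rewrite permM; case: tpermP => [_|_|_ _].
  - by right; apply/porbit_step/porbit_id.
  - by left; apply/porbit_step/porbit_id.
  - by case: zij => H; [left|right]; apply: porbit_step.
by left; apply: porbit_id.
Qed.

Lemma tperm_porbit_out s i j w :
  w \notin porbit s i -> w \notin porbit s j -> porbit (tperm i j * s)%g w = porbit s w.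
Proof.
move=> wi wj; have Epow m : (((tperm i j * s) ^+ m) w = (s ^+ m) w)%g.
  elim: m => [|m IHm]; first by rewrite !expg0.
  rewrite !expgSr !permM IHm tpermD //.
  - by apply: contra wi => /eqP ->; rewrite porbit_perm porbit_id.
  - by apply: contra wj => /eqP ->; rewrite porbit_perm porbit_id.
by apply/setP => z; apply/porbitP/porbitP => -[m ->]; exists m; rewrite Epow.
Qed.

End Cycles.

Section Length.
Variable n : nat.
Implicit Types (s t : {perm 'I_n}) (x y : 'I_n).

Lemma ncycles_le s : ncycles s <= n.
Proof. by rewrite -{2}(card_ord n); apply: card_porbits_le. Qed.

Lemma ncycles_split s x y :
  x != y -> x \in porbit s y -> ncycles (tperm x y * s)%g = (ncycles s).+1.
Proof. exact: card_porbits_split. Qed.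

Lemma ncycles_merge s x y :
  x \notin porbit s y -> (ncycles (tperm x y * s)%g).+1 = ncycles s.
Proof. exact: card_porbits_merge. Qed.

Lemma absp1 : absp (1 : {perm 'I_n}) = 0.
Proof.
rewrite /absp /ncycles /porbits card_imset ?card_ord ?subnn // => x y /= Exy.
by apply: porbit_fixed (perm1 y) _; rewrite -Exy porbit_id.
Qed.

Lemma abspV s : absp s^-1 = absp s.
Proof. by rewrite /absp /ncycles porbitsV. Qed.

Lemma absp_split s x y :
  x != y -> x \in porbit s y -> (absp (tperm x y * s)%g).+1 = absp s.
Proof.
move=> nxy xy; have := ncycles_split nxy xy.
by have := ncycles_le (tperm x y * s)%g; rewrite /absp; lia.
Qed.

Lemma absp_merge s x y :
  x \notin porbit s y -> absp (tperm x y * s)%g = (absp s).+1.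
Proof. by move/ncycles_merge; have := ncycles_le s; rewrite /absp; lia. Qed.

Lemma absp_split_r s x y :
  x != y -> x \in porbit s y -> (absp (s * tperm x y)%g).+1 = absp s.
Proof.
by move=> nxy xy; rewrite -abspV invMg tpermV -(abspV s) absp_split // porbitV.
Qed.

Lemma absp_tpermM s x y : absp (tperm x y * s)%g <= (absp s).+1.
Proof.
have [<-|nxy] := eqVneq x y; first by rewrite tperm1 mul1g.
by case: (boolP (x \in porbit s y)) => [/(absp_split nxy)|/absp_merge]; lia.
Qed.

Lemma absp_mulTperm s x y : absp (s * tperm x y)%g <= (absp s).+1.
Proof. by rewrite -abspV invMg tpermV -(abspV s); apply: absp_tpermM. Qed.

Lemma perm_moves s : s != 1%g -> exists x, s x != x.
Proof.
move=> s_ne1; case: (pickP (fun x => s x != x)) => [x sx|fixs]; first by exists x.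
by case/eqP: s_ne1; apply/permP => x; move/negbFE/eqP: (fixs x) => ->; rewrite perm1.
Qed.

(* Subadditivity |ab| <= |a| + |b|, by induction on |b|: b = (x y) b' where
   (x y) splits a cycle of b, so that |b'| = |b| - 1. *)
Lemma absp_mul_le (a b : {perm 'I_n}) : absp (a * b)%g <= absp a + absp b.
Proof.
have [m] := ubnP (absp b); elim: m a b => // m IHm a b lt_b.
have [->|b_ne1] := eqVneq b 1%g; first by rewrite mulg1 absp1 addn0.
case: (perm_moves b_ne1) => x; set y := b x => nyx.
have xy : x \in porbit b y by rewrite porbit_sym; apply/porbit_step/porbit_id.
have nxy : x != y by rewrite eq_sym.
have split_b := absp_split nxy xy.
rewrite -{1}(tpermKg x y b) mulgA; apply: leq_trans (IHm _ _ _) _; first by lia.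
by apply: leq_trans (leq_add (absp_mulTperm a x y) (leqnn _)) _; lia.
Qed.

Lemma tprod_cat (a b : seq ('I_n * 'I_n)) : tprod (a ++ b) = (tprod b * tprod a)%g.
Proof. by elim: a => [|p a IHa] /=; rewrite ?mulg1 // /Defs.pcomp IHa mulgA. Qed.

Lemma absp_tprodM h s : absp (tprod h * s)%g <= absp s + size h.
Proof.
elim: h s => [|p h IHh] s /=; first by rewrite mul1g addn0.
rewrite /Defs.pcomp -mulgA addnS -addSn; apply: leq_trans (IHh _) _.
by rewrite leq_add2r; apply: absp_tpermM.
Qed.

Lemma absp_mul_tprod h s : absp (s * tprod h)%g <= absp s + size h.
Proof.
elim: h s => [|p h IHh] s /=; first by rewrite mulg1 addn0.
by rewrite /Defs.pcomp mulgA addnS; apply: leq_trans (absp_mulTperm _ _ _) _; rewrite ltnS.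
Qed.

End Length.

Section CyclicDistance.
Variable n : nat.

(* Points of 'I_n are read on the circle Z/nZ; cdist a b is the length of
   the forward (increasing, mod n) path from a to b. *)
Definition cdist (a b : nat) : nat := if a <= b then b - a else b + n - a.

Definition inarc (u v w : nat) : Prop := 0 < cdist u v /\ cdist u v < cdist u w.

Lemma cdistP (a b : nat) : a < n ->
  (a <= b /\ cdist a b + a = b) \/ (b < a /\ cdist a b + a = b + n).
Proof. by move=> an; rewrite /cdist; case: (leqP a b); lia. Qed.

End CyclicDistance.

(* Routine arithmetic on cyclic distances: abstract every point of 'I_n as
   a natural number below n, unfold each distance with cdistP, call lia. *)
Ltac cdist_lia :=
  repeat match goal with H : context [cdist _ _ _] |- _ => revert H end;
  repeat match goal with H : context [inarc _ _ _ _] |- _ => revert H end;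
  repeat match goal with H : context [nat_of_ord _] |- _ => revert H end;
  unfold inarc;
  repeat match goal with
  | |- context [nat_of_ord ?a] =>
      have := ltn_ord a; let t := fresh "t" in set t := nat_of_ord a; clearbody t
  end;
  repeat match goal with
  | |- context [cdist ?m ?x ?y] => lazymatch goal with
      | _ : context [cdist m x y + x = y] |- _ => fail
      | _ => have := @cdistP m x y; intro end
  end;
  intros; lia.

Section Arcs.
Variable n : nat.
Local Notation cdist := (cdist n).
Local Notation inarc := (inarc n).

Implicit Types (s t : {perm 'I_n}) (i j u v w x y z : 'I_n).

Lemma cdist_lt_n u v : cdist u v < n.
Proof. cdist_lia. Qed.

Lemma cdist_add u v w : cdist u v + cdist v w < n -> cdist u w = cdist u v + cdist v w.
Proof. cdist_lia. Qed.

Lemma cdist_splitl u v w : cdist u v <= cdist u w -> cdist u v + cdist v w = cdist u w.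
Proof. cdist_lia. Qed.

Lemma cdist_splitr u v w : cdist v w <= cdist u w -> cdist u v + cdist v w = cdist u w.
Proof. cdist_lia. Qed.

Lemma neq_val x y : x != y -> (x : nat) <> y.
Proof. by move=> /eqP nxy /val_inj. Qed.

Lemma porbit_moved s x y : y \in porbit s x -> y != x -> (s x : nat) <> x.
Proof. by move=> yx nyx /val_inj sx; move: nyx; rewrite (porbit_fixed sx yx) eqxx. Qed.

(* This is the non-crossing
   property enjoyed by every permutation below the long cycle. *)
Definition arc_closed s := forall u v, inarc u v (s u) -> inarc u (s v) (s u).

Lemma nearest_before s x v : s x != x -> v \notin porbit s x ->
  exists2 z, z \in porbit s x &
    inarc z v (s z) /\ forall w, w \in porbit s x -> cdist z v <= cdist w v.
Proof.
move=> sx vx; have [z zx zmin] := arg_minnP (fun w => cdist w v) (porbit_id s x).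
exists z => //; split=> //.
have sz_z : (s z : nat) <> z.
  move=> /val_inj szz; move: sx.
  by rewrite (porbit_fixed szz (porbit_same zx (porbit_id s x))) szz eqxx.
have vz : (v : nat) <> z by move/val_inj=> vz; move/negP: vx; apply; rewrite vz.
have min_sz := zmin (s z) (porbit_step zx); clear zmin.
split; first by cdist_lia.
rewrite ltnNge; apply/negP => /cdist_splitl; cdist_lia.
Qed.

Section ArcClosed.
Variables (s : {perm 'I_n}) (s_arc : arc_closed s).

Lemma arc_closed_orbit u v w : inarc u v (s u) -> w \in porbit s v -> inarc u w (s u).
Proof. by move=> uv; apply: (porbit_ind (P := fun z => inarc u z (s u))) => // z; apply: s_arc. Qed.

Lemma arc_closed_no_return u w : w \in porbit s u -> ~ inarc u w (s u).
Proof.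
move=> wu uw; rewrite porbit_sym in wu.
by have := arc_closed_orbit uw wu; cdist_lia.
Qed.

(* Splitting a cycle by a transposition (x y), x and y in a common cycle,
   preserves arc-closedness; the arc starting at x is the one to check. *)
Lemma arc_closed_split_at x y v : x != y -> y \in porbit s x ->
  inarc x v (s y) -> inarc x (s (tperm x y v)) (s y).
Proof.
move=> nxy yx xv.
have sx_x : (s x : nat) <> x by apply: (porbit_moved yx); rewrite eq_sym.
have syx : s y \in porbit s x := porbit_step yx.
case: tpermP => [vx|vy|nvx nvy].
- by subst v; cdist_lia.
- subst v; have := arc_closed_no_return syx.
  have : (s x : nat) <> s y by apply/neq_val; rewrite (inj_eq perm_inj).
  cdist_lia.
- (* v outside the cycle of x sits in the arc (z, s z) of its nearest
     predecessor z on that cycle, and this arc is contained in (x, s y). *)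
  have nvx' : (v : nat) <> x by move/val_inj.
  have nvy' : (v : nat) <> y by move/val_inj.
  case: (boolP (v \in porbit s x)) => vx.
    have := arc_closed_no_return (porbit_same vx syx).
    have : (s v : nat) <> v.
      by apply: (porbit_moved (porbit_same vx (porbit_id s x))); apply/eqP=> e; apply: nvx.
    have : (s v : nat) <> s y by apply/neq_val; rewrite (inj_eq perm_inj); apply/eqP.
    cdist_lia.
  have sx_x' : s x != x by apply/eqP=> /(congr1 val).
  have [z zx [zv zmin]] := nearest_before sx_x' vx.
  have zv_le_xv := zmin x (porbit_id s x).
  have no_ret := arc_closed_no_return (porbit_same zx syx).
  have sv_in := s_arc zv.
  have x_z_v := cdist_splitr zv_le_xv.
  have x_z_sy : cdist x z + cdist z (s y) = cdist x (s y) by apply: cdist_splitl; case: xv; lia.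
  have x_z_sv : cdist x (s v) = cdist x z + cdist z (s v).
    have := cdist_lt_n x (s y); case: xv sv_in; move: no_ret; rewrite /inarc.
    by move=> *; apply: cdist_add; lia.
  by rewrite /inarc x_z_sv; case: xv sv_in; move: no_ret; rewrite /inarc; lia.
Qed.

Lemma arc_closed_split x y : x != y -> y \in porbit s x -> arc_closed (tperm x y * s)%g.
Proof.
move=> nxy yx u v; rewrite !permM.
case: (tpermP x y u) => [->|->|_ _] uv.
- exact: arc_closed_split_at.
- rewrite tpermC; apply: arc_closed_split_at uv; first by rewrite eq_sym.
  by rewrite porbit_sym.
- case: (tpermP x y v) => [vx|vy|_ _]; last exact: s_arc.
  + by subst v; apply: (arc_closed_orbit uv); apply: porbit_step.
  + by subst v; apply: (arc_closed_orbit uv); apply: porbit_step; rewrite porbit_sym.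
Qed.

(* If s jumps from a over c to c+1, with a < c, then the cycle of c is
   trapped in the arc (a, c+1), hence lies below c+1. *)
Lemma arc_closed_jump (a c : 'I_n) : a < c -> (s a : nat) = c.+1 ->
  forall b, b \in porbit s c -> b <= c.
Proof.
move=> ac sa b bc; have c_arc : inarc a c (s a) by cdist_lia.
by have := arc_closed_orbit c_arc bc; cdist_lia.
Qed.

End ArcClosed.

(* The long cycle x |-> x+1 is arc-closed: all its arcs (u, u+1) are empty. *)
Lemma arc_closed_longcycle : arc_closed (longcycle n).
Proof.
move=> u v; rewrite /longcycle !permE /= => uv; exfalso; move: uv.
have [u1n|u1n] := ltnP u.+1 n; first by rewrite modn_small //; cdist_lia.
have -> : u.+1 = n by have := ltn_ord u; lia.
by rewrite modnn; cdist_lia.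
Qed.

End Arcs.

Section Geodesic.
Variable n : nat.
Implicit Types (s t : {perm 'I_n}).

Lemma preceq_step s t : preceq s t -> s != t ->
  exists x y, [/\ x != y, y \in porbit (tperm x y * s)%g x,
                  preceq (tperm x y * s)%g t &
                  absp (t * (tperm x y * s)^-1)%g < absp (t * s^-1)%g].
Proof.
rewrite /preceq /Defs.pcomp => st ne; set d := (t * s^-1)%g in st *.
have d_ne1 : d != 1%g by rewrite -eq_mulgV1 eq_sym.
case: (perm_moves d_ne1) => x; set y := d x => nyx.
have nxy : x != y by rewrite eq_sym.
have xy : x \in porbit d y by rewrite porbit_sym; apply/porbit_step/porbit_id.
have s'_long := absp_tpermM s x y.
set s' := (tperm x y * s)%g in s'_long *.
have Ed : (t * s'^-1)%g = (d * tperm x y)%g by rewrite invMg tpermV mulgA.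
have d_shorter := absp_split_r nxy xy.
have tri : absp t <= absp (t * s'^-1)%g + absp s' by rewrite -{1}(mulgKV s' t) absp_mul_le.
have st' : absp t = absp s' + absp (t * s'^-1)%g.
  by move: tri; rewrite Ed; lia.
exists x, y; split=> //; last by rewrite Ed; lia.
apply/negPn/negP; rewrite -porbit_sym => /absp_merge.
by rewrite tpermKg -/s'; rewrite Ed in st'; lia.
Qed.

Lemma preceq_arc_closed s t : arc_closed t -> preceq s t -> arc_closed s.
Proof.
move=> t_arc; have [m] := ubnP (absp (t * s^-1)%g).
elim: m s => // m IHm s lt_m st; have [->//|ne] := eqVneq s t.
have [x [y [nxy yx st' closer]]] := preceq_step st ne.
rewrite -(tpermKg x y s); apply: arc_closed_split nxy yx.
by apply: IHm st'; lia.
Qed.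

End Geodesic.

Section MergeStep.
Variables (n : nat) (s : {perm 'I_n}) (i j : 'I_n).
Hypotheses (s_arc : arc_closed s) (t_arc : arc_closed (tperm i j * s)%g).
Hypotheses (lt_ij : i < j) (ij_apart : i \notin porbit s j).
Local Notation inarc := (inarc n).

Let ti : ((tperm i j * s)%g i : nat) = s j. Proof. by rewrite permM tpermL. Qed.
Let tj : ((tperm i j * s)%g j : nat) = s i. Proof. by rewrite permM tpermR. Qed.
Let sj_j : s j \in porbit s j. Proof. exact/porbit_step/porbit_id. Qed.
Let i_si : i \in porbit s (s i). Proof. by rewrite porbit_sym; apply/porbit_step/porbit_id. Qed.

Let apart_i z : z \in porbit s j -> (z : nat) <> i.
Proof. by move=> zj /val_inj zi; move: ij_apart; rewrite -zi zj. Qed.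
Let apart_si z : z \in porbit s j -> (s i : nat) <> z.
Proof.
by move=> zj /val_inj e; move: ij_apart; rewrite -e in zj; rewrite (porbit_trans i_si zj).
Qed.

Lemma merged_cycle_above x : x \in porbit s j -> i < x.
Proof.
move=> xj; rewrite ltnNge; apply/negP => xi.
have nxj : x != j by rewrite -val_eqE neq_ltn (leq_ltn_trans xi lt_ij).
have sj_j' := porbit_moved xj nxj.
have no_ret_t := arc_closed_no_return t_arc (merge_join ij_apart).
have no_ret_s := arc_closed_no_return s_arc xj.
have sj_i := apart_i sj_j; have x_i := apart_i xj.
move: ti; cdist_lia.
Qed.

Lemma merged_cycle_gap y : y \in porbit s i ->
  (forall x, x \in porbit s j -> y < x) -> y <= i.
Proof.
move=> yi below; rewrite leqNgt; apply/negP => iy.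
have no_ret := arc_closed_no_return t_arc (merge_sub ij_apart yi).
have y_sj := below _ sj_j; have i_sj := merged_cycle_above sj_j.
move: ti; cdist_lia.
Qed.

Lemma merged_cycle_max x : x \in porbit s j -> x <= j.
Proof.
move=> xj; rewrite leqNgt; apply/negP => jx.
have no_ret := arc_closed_no_return t_arc (merge_sub ij_apart xj).
have si_x := apart_si xj; have si_j := apart_si (porbit_id s j).
have j_arc : inarc i j (s i) by move: tj; cdist_lia.
have := arc_closed_orbit s_arc j_arc xj.
move: tj; cdist_lia.
Qed.

Lemma next_cycle_above y : val y = i.+1 -> forall x, x \in porbit s y -> i < x.
Proof.
move=> yv x xy; have {}yv : (y : nat) = i.+1 := yv.
have [sj_y|sj_y] := eqVneq (s j) y.
  by apply: merged_cycle_above; rewrite -sj_y in xy; apply: porbit_trans xy sj_j.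
have i_sj := merged_cycle_above sj_j; have sj_y' := neq_val sj_y.
have y_arc : inarc i y ((tperm i j * s)%g i) by rewrite ti; cdist_lia.
have := arc_closed_orbit t_arc y_arc (merge_sub ij_apart xy).
move: ti; cdist_lia.
Qed.

End MergeStep.

Section Chain.
Variables (n k : nat) (g : seq ('I_n * 'I_n)) (p0 : 'I_n * 'I_n).
Hypothesis g_min : Sigma k g.

Let size_g : size g = k. Proof. by case: g_min. Qed.

Lemma gam0 : gam g 0 = 1%g.
Proof. by rewrite /gam take0. Qed.

Lemma gamS m : m < k -> gam g m.+1 = (transp (nth p0 g m) * gam g m)%g.
Proof.
by move=> mk; rewrite /gam (take_nth p0) ?size_g // -cats1 tprod_cat /= /Defs.pcomp mul1g.
Qed.

Lemma gam_prefix m : m <= k -> absp (gam g m) = m /\ preceq (gam g m) (longcycle n).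
Proof.
move=> mk; case: g_min => _ _ len_g below_c.
have Eg : tprod g = (tprod (drop m g) * gam g m)%g by rewrite /gam -tprod_cat cat_take_drop.
have s1 : size (take m g) = m by rewrite size_takel // size_g.
have s2 : size (drop m g) = k - m by rewrite size_drop size_g.
have u1 := absp_tprodM (take m g) 1%g; rewrite mulg1 absp1 s1 in u1.
have u2 := absp_tprodM (drop m g) (gam g m); rewrite -Eg len_g s2 in u2.
have len_m : absp (gam g m) = m by move: u1 u2; rewrite /gam; lia.
split=> //; move: below_c; rewrite /preceq /Defs.pcomp len_m len_g.
set c := longcycle n.
have E3 : (c * (gam g m)^-1)%g = (c * (tprod g)^-1 * tprod (drop m g))%g.
  by rewrite Eg invMg !mulgA mulgVK.
have u3 := absp_mul_tprod (drop m g) (c * (tprod g)^-1)%g; rewrite -E3 s2 in u3.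
have u4 := absp_mul_tprod (take m g) (c * (gam g m)^-1)%g.
rewrite s1 -/(gam g m) mulgVK in u4.
by move: u3 u4; lia.
Qed.

(* Step m+1 multiplies gamma_m by (i j) with i < j lying in distinct cycles
   (a split would shorten the product), and both permutations are
   arc-closed. *)
Lemma gam_merge_step m i j : m < k -> nth p0 g m = (i, j) ->
  [/\ gam g m.+1 = (tperm i j * gam g m)%g, arc_closed (gam g m),
      arc_closed (tperm i j * gam g m)%g, i < j & i \notin porbit (gam g m) j].
Proof.
move=> mk Em; have gS : gam g m.+1 = (tperm i j * gam g m)%g by rewrite gamS // Em.
have arc l : l <= k -> arc_closed (gam g l).
  by move=> /gam_prefix[_]; apply/preceq_arc_closed/arc_closed_longcycle.
have lt_ij : i < j.
  by case: g_min => _ /allP/(_ (i, j)) + _ _; apply; rewrite -Em mem_nth // size_g.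
split=> //; first exact: arc (ltnW mk).
  by rewrite -gS; apply: arc.
apply/negP => ij; have nij : i != j by rewrite -val_eqE neq_ltn lt_ij.
have := absp_split nij ij; rewrite -gS.
by have [-> _] := gam_prefix (ltnW mk); have [-> _] := gam_prefix mk; lia.
Qed.

Lemma gam_porbit_mono l m w z : l <= m <= k ->
  z \in porbit (gam g l) w -> z \in porbit (gam g m) w.
Proof.
case/andP=> lm; rewrite -(subnKC lm); elim: (m - l) => [|d IHd] mk zw; first by rewrite addn0.
rewrite addnS in mk *; case Ed: (nth p0 g (l + d)) => [i j].
by have [-> _ _ _ apart] := gam_merge_step mk Ed; apply/(merge_sub apart)/IHd/zw/ltnW.
Qed.

Definition firsts m : seq nat := [seq val p.1 | p <- take m g].

Lemma firstsS m : m < k -> firsts m.+1 = rcons (firsts m) (val (nth p0 g m).1).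
Proof. by move=> mk; rewrite /firsts (take_nth p0) ?size_g // map_rcons. Qed.

(* The minimum of a nontrivial cycle of gamma_m is one of i_1, ..., i_m:
   when (i j) merges two cycles, the whole cycle of j lies above i. *)
Lemma cycle_min_first m x : m <= k -> (exists2 z, z \in porbit (gam g m) x & z != x) ->
  exists y, [/\ y \in porbit (gam g m) x, val y \in firsts m &
                forall z, z \in porbit (gam g m) x -> y <= z].
Proof.
elim: m x => [|m IHm] x mk [z zx nzx].
  by move: nzx; rewrite gam0 in zx; rewrite (porbit_fixed (perm1 x) zx) eqxx.
case Em: (nth p0 g m) => [i j]; rewrite firstsS // Em /=.
have [gS s_arc t_arc lt_ij apart] := gam_merge_step mk Em; rewrite gS in zx *.
set s := gam g m in zx s_arc t_arc apart IHm *.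
have j_above := merged_cycle_above s_arc t_arc lt_ij apart.
have [xij|xij] := boolP ((x \in porbit s i) || (x \in porbit s j)); last first.
  rewrite negb_or in xij; case/andP: xij => xi xj.
  rewrite tperm_porbit_out // in zx *.
  have [y [yx yf ymin]] := IHm x (ltnW mk) (ex_intro2 _ _ z zx nzx).
  by exists y; split=> //; rewrite mem_rcons in_cons yf orbT.
have -> : porbit (tperm i j * s) x = porbit (tperm i j * s) i.
  apply/eqP; rewrite eq_porbit_mem; case/orP: xij => [xi|xj]; first exact: merge_sub.
  exact: porbit_trans (merge_sub apart xj) (merge_join apart).
have [si|si] := eqVneq (s i) i.
  exists i; split; [exact: porbit_id | by rewrite mem_rcons mem_head |].
  move=> u /tperm_porbit_in[ui|uj]; last exact/ltnW/j_above.
  by rewrite (porbit_fixed si ui).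
have [y [yi yf ymin]] := IHm i (ltnW mk) (ex_intro2 _ _ (s i) (porbit_step (porbit_id s i)) si).
exists y; split; [exact: merge_sub | by rewrite mem_rcons in_cons yf orbT |].
move=> u /tperm_porbit_in[ui|uj]; first exact: ymin.
by apply/(leq_trans (ymin _ (porbit_id s i)))/ltnW/j_above.
Qed.

(* Item 4: if i_{m+1} + 1 is none of i_1, ..., i_m, it is a fixed point
   of gamma_m, because a nontrivial cycle of gamma_m containing it would have
   its minimum among the i_s, and lie above i_{m+1} (item 3). *)
Lemma next_cycle_trivial m i j y : m < k -> nth p0 g m = (i, j) -> val y = i.+1 ->
  i.+1 \notin firsts m -> porbit (gam g m) y = [set y].
Proof.
move=> mk Em yv yf; have [_ s_arc t_arc lt_ij apart] := gam_merge_step mk Em.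
apply/setP => z; rewrite inE; apply/idP/eqP => [zy|->]; last exact: porbit_id.
apply/eqP/negPn/negP => nzy.
have [w [wy wf wmin]] := cycle_min_first (ltnW mk) (ex_intro2 _ _ z zy nzy).
have i_w := next_cycle_above s_arc t_arc lt_ij apart yv wy.
have w_y := wmin y (porbit_id _ y).
have w_i1 : i.+1 = val w by apply/eqP; rewrite eqn_leq i_w -yv w_y.
by move: yf; rewrite w_i1 wf.
Qed.

(* Item 5, main step: if i = i_{m+1} is maximal among all the i_s and does
   not occur after step m+1, and j = j_{m+1} differs from i+1, then i+1 stays
   a fixed point of all the later partial products.  Otherwise a later
   (i' j') with i' < i would send i' to i+1, jumping over the cycle of i,
   which already contains j > i. *)
Lemma next_stays_fixed m i j y : m < k -> nth p0 g m = (i, j) -> val y = i.+1 ->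
  j != y -> (forall p, p \in g -> p.1 <= i) ->
  (forall s, m < s < k -> val (nth p0 g s).1 != i) ->
  forall s, m < s <= k -> gam g s y = y.
Proof.
move=> mk Em yv jy below last_i; have {}yv : (y : nat) = i.+1 := yv.
have iy : i != y by rewrite -val_eqE /= yv neq_ltn ltnSn.
have [gS _ _ lt_ij apart] := gam_merge_step mk Em.
have yf : i.+1 \notin firsts m.
  by apply/mapP=> -[p /mem_take/below + e]; rewrite -e ltnn.
have fix_m : gam g m y = y.
  by apply/set1P; rewrite -(next_cycle_trivial mk Em yv yf); apply/porbit_step/porbit_id.
have j_i : j \in porbit (gam g m.+1) i by rewrite gS; apply: merge_join.
elim=> [//|s IHs] /andP[ms sk]; have [->|sm] := eqVneq s m.
  by rewrite gS permM tpermD.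
have {}ms : m < s by rewrite ltn_neqAle eq_sym sm.
case Es: (nth p0 g s) => [i' j'].
have [gS' _ t_arc _ _] := gam_merge_step sk Es.
have i'_le : i' <= i by apply: (below (i', j')); rewrite -Es mem_nth // size_g.
have i'_ne : val i' != i by have := last_i s; rewrite Es; apply; apply/andP.
have fix_s : gam g s y = y by apply: IHs; rewrite ms ltnW.
rewrite gS' permM; case: tpermP => [yi'|yj'|_ _]; last exact: fix_s.
  by move: i'_le; rewrite -yi'; lia.
have j_i' : j \in porbit (gam g s.+1) i by apply: gam_porbit_mono j_i; rewrite ltnS (ltnW ms) sk.
have t_i' : ((tperm i' j' * gam g s)%g i' : nat) = i.+1 by rewrite permM tpermL -yj' fix_s.
have i'_lt : i' < i by rewrite ltn_neqAle i'_ne i'_le.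
by have := arc_closed_jump t_arc i'_lt t_i'; rewrite -gS' => /(_ j j_i'); rewrite leqNgt lt_ij.
Qed.

Lemma gam_one_cycle : k = n.-1 -> forall x y, y \in porbit (gam g k) x.
Proof.
move=> kn x y; apply/negPn/negP => yx.
have two : 1 < ncycles (gam g k).
  by apply: (@card_porbits_ge2 _ _ x y); rewrite eq_porbit_mem porbit_sym.
have [len _] := gam_prefix (leqnn k); have := ncycles_le (gam g k).
by move: len; rewrite /absp; lia.
Qed.

End Chain.

Unset Implicit Arguments.

Theorem lemma3p1 (n k : nat) (g : seq ('I_n * 'I_n)) (l : nat) (il jl : 'I_n) :
  1 <= n -> 1 <= k -> Sigma k g ->
  1 <= l <= k -> onth g l.-1 = Some (il, jl) ->
  (* 1 *)
  ((forall x, x \in Cyc (gam g l.-1) jl -> il < x) /\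
   (forall y, y \in Cyc (gam g l.-1) il ->
      (forall x, x \in Cyc (gam g l.-1) jl -> y < x) -> y <= il)) /\
  (* 2 *)
  (forall x, x \in Cyc (gam g l.-1) jl -> x <= jl) /\
  (* 3 *)
  (forall y : 'I_n, val y = il.+1 ->
     forall x, x \in Cyc (gam g l.-1) y -> il < x) /\
  (* 4 *)
  (forall y : 'I_n, val y = il.+1 ->
     il.+1 \notin [seq val p.1 | p <- take l.-1 g] ->
     Cyc (gam g l.-1) y = [set y]) /\
  (* 5 *)
  (k = n.-1 ->
   (forall p, p \in g -> p.1 <= il) ->
   (forall s, l < s <= k -> val (nth (il, jl) g s.-1).1 != il) ->
   val jl = il.+1).
Proof.
move=> _ _ g_min /andP[l1 lk] Egl.
have Em : nth (il, jl) g l.-1 = (il, jl) := @onth_nth _ (il, jl) (il, jl) g l.-1 Egl.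
have mk : l.-1 < k by lia.
have [_ s_arc t_arc lt_ij apart] := gam_merge_step g_min mk Em.
rewrite /Cyc; split; [split|split; [|split; [|split]]].
- exact: merged_cycle_above s_arc t_arc lt_ij apart.
- exact: merged_cycle_gap s_arc t_arc lt_ij apart.
- exact: merged_cycle_max s_arc t_arc lt_ij apart.
- exact: next_cycle_above s_arc t_arc lt_ij apart.
- by move=> y yv il1; exact: (next_cycle_trivial g_min mk Em yv il1).
move=> kn below last_i; apply/eqP/negPn/negP => j_ne.
have yn : il.+1 < n by have := ltn_ord jl; lia.
pose y := Ordinal yn.
have jy : jl != y by rewrite -val_eqE.
have last_i' s : l.-1 < s < k -> val (nth (il, jl) g s).1 != il.
  by move=> /andP[ls sk]; apply: (last_i s.+1); lia.
have fix_k := next_stays_fixed g_min mk Em (erefl : val y = il.+1) jy below last_i'.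
have fix_y : gam g k y = y by apply: fix_k; rewrite mk leqnn.
by move: (porbit_fixed fix_y (gam_one_cycle g_min kn y il)) => /(congr1 val) /=; lia.
Qed.
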